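(* Let $\mathcal P$ be an equal-area CPOS $2n$-gon which is not symmetric with respect to any point. Then for every $i$, $D(i-\tfrac12)\ne D(i+\tfrac12)$ and $M_i$ is the midpoint of the segment $D(i-\tfrac12)D(i+\tfrac12)$. Moreover every vertex of the area evolute and every vertex of the central symmetry set is a cusp; in particular both have exactly $n$ cusps.
   Context: A CPOS $2n$-gon ($n\ge2$) is a closed planar polygon $\mathcal P$ with vertices $P_1,\dots,P_{2n}$ (indices mod $2n$) bounding a convex region, with no two adjacent sides parallel, with $P_{i+n+1}-P_{i+n}$ parallel to $P_{i+1}-P_i$ for all $i$, and positively oriented: $[P_{i+1}-P_i,P_{j+1}-P_j]>0$ for $1\le i<j\le n$ ($[\cdot,\cdot]$ = determinant). It is equal-area if $[P_{i+1}-P_i,P_i-P_{i-1}]$ is independent of $i$, and symmetric w.r.t. $O$ if $P_{i+n}-O=O-P_i$ for all $i$. $d_i$ is the line through $P_i,P_{i+n}$; $D(i+\tfrac12)=d_i\cap d_{i+1}$; the central symmetry set is the closed polygon with vertices $D(1+\tfrac12),\dots,D(n+\tfrac12)$; $M_i=\tfrac12(P_i+P_{i+n})$ and the area evolute is the closed polygon with vertices $M_1,\dots,M_n$. Define $\lambda(i+\tfrac12)$, $1\le i\le 2n$, by $D(i+\tfrac12)=P_i+\lambda(i+\tfrac12)(P_{i+n}-P_i)$ (with $D(i+n+\frac12)=D(i+\frac12)$). A vertex $D(i_0+\tfrac12)$ is a cusp if $\lambda(i_0+\tfrac12)$ is a local extremum of the cyclic sequence $(\lambda(i+\tfrac12))_{i\bmod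 2n}$; a vertex $M_{i_0}$ is a cusp if $(\lambda(i_0-\tfrac12)-\tfrac12)(\lambda(i_0+\tfrac12)-\tfrac12)<0$. *)

(* Points of the plane are row vectors 'rV[R]_2 over an
   ordered (real) field R. Polygon vertices are indexed by int (indices
   taken mod 2n via a periodicity hypothesis). *)
From HB Require Import structures.
From mathcomp Require Import all_boot all_order all_algebra.
Set Implicit Arguments.
Unset Strict Implicit.
Unset Printing Implicit Defensive.
Import Order.TTheory GRing.Theory Num.Theory.
Local Open Scope ring_scope.

Section Defs.
Variable R : realFieldType.
Notation pt := 'rV[R]_2.

Definition det2 (u v : pt) : R := u 0 0 * v 0 1 - u 0 1 * v 0 0.

Definition side (P : int -> pt) (i : int) : pt := P (i + 1) - P i.

Definition CPOS (n : nat) (P : int -> pt) : Prop :=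
  (2 <= n)%N /\
      (forall i : int, P (i + (2 * n)%:Z) = P i) /\
      (* bounds a convex region: every vertex lies (weakly) to the left of
         every directed side line *)
      (forall i j : int, 0 <= det2 (side P i) (P j - P i)) /\
      (forall i : int, det2 (side P (i + 1)) (side P i) != 0) /\
      (forall i : int, det2 (side P (i + n%:Z)) (side P i) = 0) /\
      (* positively oriented *)
      (forall i j : int, 1 <= i -> i < j -> j <= n%:Z ->
        0 < det2 (side P i) (side P j)).

Definition equal_area (P : int -> pt) : Prop :=
  forall i j : int, det2 (side P i) (P i - P (i - 1)) =
                    det2 (side P j) (P j - P (j - 1)).

Definition symmetric_wrt (n : nat) (P : int -> pt) (O : pt) : Prop :=
  forall i : int, P (i + n%:Z) - O = O - P i.

Definition on_line (A B X : pt) : Prop := det2 (B - A) (X - A) = 0.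

(* D i stands for D(i + 1/2) = d_i \cap d_{i+1}, where d_i is the line
   through P_i and P_{i+n}. *)
Definition is_D (n : nat) (P : int -> pt) (D : int -> pt) : Prop :=
  forall i : int, on_line (P i) (P (i + n%:Z)) (D i) /\
                  on_line (P (i + 1)) (P (i + 1 + n%:Z)) (D i).

(* lam i stands for lambda(i + 1/2) *)
Definition is_lambda (n : nat) (P : int -> pt) (D : int -> pt)
  (lam : int -> R) : Prop :=
  forall i : int, D i = P i + lam i *: (P (i + n%:Z) - P i).

Definition M (n : nat) (P : int -> pt) (i : int) : pt :=
  2^-1 *: (P i + P (i + n%:Z)).

(* M_{i0} is a cusp of the area evolute *)
Definition area_evolute_cusp (lam : int -> R) (i0 : int) : bool :=
  (lam (i0 - 1) - 2^-1) * (lam i0 - 2^-1) < 0.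

(* D(i0 + 1/2) is a cusp of the central symmetry set: lambda(i0+1/2) is a
   (strict) local extremum of the cyclic sequence of lambdas *)
Definition css_cusp (lam : int -> R) (i0 : int) : bool :=
  (lam (i0 - 1) < lam i0) && (lam (i0 + 1) < lam i0) ||
  (lam i0 < lam (i0 - 1)) && (lam i0 < lam (i0 + 1)).

End Defs.

From HB Require Import structures.
From mathcomp Require Import all_boot all_order all_algebra.
From mathcomp Require Import ring lra zify.
Import Order.TTheory GRing.Theory Num.Theory.
Local Open Scope ring_scope.

(* Write s_i = P_{i+1} - P_i.  Equal area says det(s_i, s_{i+1}) is a constant
   [turn] > 0, and opposite sides being parallel gives s_{i+n} = t_i s_i.
   Comparing det(s_{i+n}, s_{i+n+1}) with det(s_i, s_{i+1}) yields
   t_i t_{i+1} = 1; orientation gives t_1 < 0, hence every t_i < 0; and if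
   one t_i = -1 then all are and the polygon is centrally symmetric.
   Convexity makes the diagonals P_i P_{i+n} transversal to the sides, and
   intersecting consecutive diagonals gives lambda_i = 1 / (1 - t_i).  Hence
   lambda_{i-1} + lambda_i = 1 and, without central symmetry, lambda_i <> 1/2.
   This determines D(i - 1/2), D(i + 1/2) as the points with parameters
   1 - lambda_i, lambda_i on the diagonal d_i, whence they are distinct with
   midpoint M_i.  Finally, any sequence with lambda_{i-1} + lambda_i = 1 and
   no term 1/2 alternates around 1/2, so every index is a cusp of both curves. *)

Set Implicit Arguments.
Unset Strict Implicit.
Unset Printing Implicit Defensive.

Section PlaneAlgebra.
Variable R : realFieldType.
Notation pt := 'rV[R]_2.

Lemma row2_eq (u v : pt) : u 0 0 = v 0 0 -> u 0 1 = v 0 1 -> u = v.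
Proof.
move=> e0 e1; apply/rowP => -[[|[|//]] j].
  by rewrite (_ : Ordinal j = 0) //; apply: val_inj.
by rewrite (_ : Ordinal j = 1) //; apply: val_inj.
Qed.

Lemma det2N (u v : pt) : det2 u v = - det2 v u.
Proof. rewrite /det2; ring. Qed.

Lemma det2Zl (a : R) (u v : pt) : det2 (a *: u) v = a * det2 u v.
Proof. rewrite /det2 !mxE; ring. Qed.

Lemma det2Zr (a : R) (u v : pt) : det2 u (a *: v) = a * det2 u v.
Proof. rewrite /det2 !mxE; ring. Qed.

Lemma det2_along (a b c d : pt) :
  det2 a (b + a + c - d) = det2 a c - det2 a (d - b).
Proof. rewrite /det2 !mxE; ring. Qed.

(* Incidence of the point [A + l (Q - A)] with the line through [A + S] and
   [Q + t S]: unless [S] is parallel to [Q - A], it holds iff [1 + (t-1) l = 0]. *)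
Lemma det2_cross (t l : R) (A Q S : pt) :
  det2 (Q + t *: S - (A + S)) (A + l *: (Q - A) - (A + S)) =
  det2 S (Q - A) * (1 + (t - 1) * l).
Proof. rewrite /det2 !mxE; ring. Qed.

(* The same point, parametrised on either of the two lines of [det2_cross]. *)
Lemma affine_shift (t : R) (A Q S : pt) : 1 - t != 0 ->
  A + (1 - t)^-1 *: (Q - A) = A + S + (1 - t)^-1 *: (Q + t *: S - (A + S)).
Proof. by move=> t1; apply/rowP => j; rewrite !mxE; field. Qed.

Lemma parallel_coord (a b c : pt) :
  det2 b a = 0 -> det2 a c != 0 -> b = (det2 b c / det2 a c) *: a.
Proof.
move=> ba ac; rewrite /det2 in ba.
apply: row2_eq; rewrite mxE; apply: (mulIf ac); rewrite mulrAC divfK // /det2.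
  by have := congr1 ( *%R (c 0 0)) ba; rewrite mulr0; lra.
by have := congr1 ( *%R (c 0 1)) ba; rewrite mulr0; lra.
Qed.
End PlaneAlgebra.

Lemma int_shift_invariant (f : int -> Prop) :
  (forall i, f i <-> f (i + 1)) -> forall i j, f i -> f j.
Proof.
move=> fS i j fi; rewrite -(subrK i j) addrC.
elim/int_ind: (j - i) => [|k IH|k IH]; first by rewrite addr0.
  by rewrite -addn1 PoszD addrA -fS.
by rewrite -addn1 PoszD opprD addrA fS subrK.
Qed.

Section EqualAreaPolygon.
Variables (R : realFieldType) (n : nat) (P : int -> 'rV[R]_2).
Hypothesis n_ge2 : (2 <= n)%N.
Hypothesis convexP : forall i j : int, 0 <= det2 (side P i) (P j - P i).
Hypothesis parallelP : forall i : int, det2 (side P (i + n%:Z)) (side P i) = 0.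
Hypothesis orientP : forall i j : int, 1 <= i -> i < j -> j <= n%:Z ->
  0 < det2 (side P i) (side P j).
Hypothesis equal_areaP : equal_area P.

Local Notation s := (side P).

Lemma vertexS i : P (i + 1) = P i + s i.
Proof. by rewrite /side [P i + _]addrC subrK. Qed.

Lemma oppositeS i : i + n%:Z + 1 = i + 1 + n%:Z.
Proof. exact: addrAC. Qed.

Definition turn : R := det2 (s 1) (s 2).

Lemma turnE i : det2 (s i) (s (i + 1)) = turn.
Proof.
have := equal_areaP (i + 1) 2; rewrite addrK => h.
by rewrite /turn det2N [RHS]det2N; congr (- _); exact: h.
Qed.

Lemma turn_gt0 : 0 < turn.
Proof. by apply: orientP => //; lia. Qed.

Lemma turn_neq0 : turn != 0.
Proof. exact: lt0r_neq0 turn_gt0. Qed.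

(* Opposite sides are parallel, so [s (i + n)] is a multiple of [s i]; the
   factor is read off by pairing with [s (i + 1)], which is transversal. *)
Definition ratio (i : int) : R := det2 (s (i + n%:Z)) (s (i + 1)) / turn.

Lemma oppositeE i : s (i + n%:Z) = ratio i *: s i.
Proof. by rewrite /ratio -(turnE i); apply: parallel_coord; rewrite // turnE turn_neq0. Qed.

(* Equal area at [i] and at the opposite index [i + n]. *)
Lemma ratio_mulS i : ratio i * ratio (i + 1) = 1.
Proof.
have := turnE (i + n%:Z); rewrite oppositeS !oppositeE det2Zl det2Zr turnE.
by rewrite mulrA -{2}[turn]mul1r => /(mulIf turn_neq0).
Qed.

(* Orientation of [s 1] and [s n] forces [ratio 1 < 0]; the sign propagates
   since consecutive ratios are mutually inverse. *)
Lemma ratio_lt0 i : ratio i < 0.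
Proof.
have r1 : ratio 1 < 0.
  have := turnE n%:Z; rewrite (addrC n%:Z 1) oppositeE det2Zr det2N.
  have : 0 < det2 (s 1) (s n%:Z) by apply: orientP => //; lia.
  by have := turn_gt0; nra.
apply: (@int_shift_invariant (fun j => ratio j < 0) _ 1) r1 => j.
by have := ratio_mulS j; split; nra.
Qed.

(* If one ratio is [-1] then all are, opposite sides are equal and opposite,
   and the midpoints of the diagonals [P i P (i + n)] all coincide. *)
Lemma ratio_m1_symmetric i : ratio i = -1 -> exists O, symmetric_wrt n P O.
Proof.
move=> ri.
have ratio_m1 j : ratio j = -1.
  apply: (@int_shift_invariant (fun j => ratio j = -1) _ i) ri => k.
  by have r := ratio_mulS k; split=> e; rewrite e in r; lra.
have diag_sum j : P (j + n%:Z) + P j = P n%:Z + P 0.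
  apply: (@int_shift_invariant (fun j => P (j + n%:Z) + P j = _) _ 0 j);
    last by rewrite add0r.
  move=> k; suff -> : P (k + 1 + n%:Z) + P (k + 1) = P (k + n%:Z) + P k by [].
  by rewrite -oppositeS !vertexS oppositeE ratio_m1 scaleN1r addrACA addNr addr0.
exists (2^-1 *: (P n%:Z + P 0)) => j; rewrite -(diag_sum j).
by apply/rowP => k; rewrite !mxE; lra.
Qed.

(* Convexity at the vertex [P (i + 2)] seen from the side [s (i + n)]: the
   diagonal [P i P (i + n)] turns at least as much as the next side. *)
Lemma diagonal_det_ge i : turn <= det2 (s i) (P (i + n%:Z) - P i).
Proof.
have := convexP (i + n%:Z) (i + 1 + 1).
rewrite !vertexS oppositeE det2Zl det2_along turnE.
by have := ratio_lt0 i; nra.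
Qed.

Lemma diagonal_det_gt0 i : 0 < det2 (s i) (P (i + n%:Z) - P i).
Proof. exact: lt_le_trans turn_gt0 (diagonal_det_ge i). Qed.

Section CentralSymmetrySet.
Variables (D : int -> 'rV[R]_2) (lam : int -> R).
Hypothesis DP : is_D n P D.
Hypothesis lamP : is_lambda n P D lam.

(* [D i] lies on the diagonal [d (i + 1)], which is not parallel to [s i]. *)
Lemma lambdaE i : lam i = (1 - ratio i)^-1.
Proof.
have [_] := DP i; rewrite /on_line lamP -oppositeS !vertexS oppositeE det2_cross.
move/eqP; rewrite mulf_eq0 (gt_eqF (diagonal_det_gt0 i)) /= => /eqP h.
have r := ratio_lt0 i.
by apply: (@mulIf _ (1 - ratio i)); [lra | rewrite mulVf; lra].
Qed.

(* With [t' = ratio (i - 1) = 1 / ratio i], [1 / (1 - t') + 1 / (1 - t) = 1]. *)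
Lemma lambda_sum i : lam (i - 1) + lam i = 1.
Proof.
have r := ratio_mulS (i - 1); rewrite subrK in r.
have r0 := ratio_lt0 (i - 1); have r1 := ratio_lt0 i.
rewrite !lambdaE; set a := 1 - ratio (i - 1); set b := 1 - ratio i.
have a0 : a != 0 by rewrite /a; apply/eqP; lra.
have b0 : b != 0 by rewrite /b; apply/eqP; lra.
have -> : a^-1 + b^-1 = (a + b) / (a * b) by field; rewrite a0 b0.
by rewrite (_ : a * b = a + b) ?mulfV // /a /b; [apply/eqP; lra | lra].
Qed.

Lemma D_from_next i : D i = P (i + 1) + lam i *: (P (i + 1 + n%:Z) - P (i + 1)).
Proof.
rewrite lamP -oppositeS !vertexS oppositeE lambdaE; apply: affine_shift.
by have r := ratio_lt0 i; apply/eqP; lra.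
Qed.

Lemma D_prev i : D (i - 1) = P i + (1 - lam i) *: (P (i + n%:Z) - P i).
Proof. by rewrite D_from_next subrK -(lambda_sum i) addrK. Qed.

(* [M i] is the midpoint of [D (i - 1)] and [D i], which sit at the
   symmetric parameters [1 - lam i] and [lam i] on the diagonal [d i]. *)
Lemma M_midpoint i : M n P i = 2^-1 *: (D (i - 1) + D i).
Proof. by rewrite /M D_prev lamP; apply/rowP => k; rewrite !mxE; ring. Qed.

Hypothesis asymmetric : ~ exists O, symmetric_wrt n P O.

(* [lam i = 1/2] would mean [ratio i = -1], i.e. central symmetry. *)
Lemma lambda_neq_half i : lam i != 2^-1.
Proof.
rewrite lambdaE; apply/eqP => /invr_inj e.
by apply: asymmetric; apply: (@ratio_m1_symmetric i); lra.
Qed.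

(* [D (i - 1)] and [D i] have different parameters [1 - lam i] and [lam i]
   on the nondegenerate diagonal [P i P (i + n)]. *)
Lemma D_consecutive_neq i : D (i - 1) != D i.
Proof.
rewrite D_prev lamP; apply/eqP => /addrI /eqP.
rewrite -subr_eq0 -scalerBl scaler_eq0 => /orP [/eqP h | /eqP h].
  by move/eqP: (lambda_neq_half i); apply; lra.
by have := diagonal_det_gt0 i; rewrite h /det2 !mxE; lra.
Qed.
End CentralSymmetrySet.
End EqualAreaPolygon.

Section CuspsOfComplementarySequence.
Variables (R : realFieldType) (lam : int -> R).
Hypothesis lam_sum : forall i, lam (i - 1) + lam i = 1.
Hypothesis lam_half : forall i, lam i != 2^-1.

(* [lam (i - 1) - 1/2 = - (lam i - 1/2)]: the sign changes at every step. *)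
Lemma all_area_evolute_cusps i : area_evolute_cusp lam i.
Proof.
rewrite /area_evolute_cusp (_ : lam (i - 1) = 1 - lam i); last first.
  by have := lam_sum i; lra.
by case/orP: (lt_total (lam_half i)) => h; nra.
Qed.

(* Both neighbours of [lam i] equal [1 - lam i], so [lam i] is a strict
   local maximum or minimum according as it lies above or below [1/2]. *)
Lemma all_css_cusps i : css_cusp lam i.
Proof.
rewrite /css_cusp (_ : lam (i - 1) = 1 - lam i); last first.
  by have := lam_sum i; lra.
rewrite (_ : lam (i + 1) = 1 - lam i); last first.
  by have := lam_sum (i + 1); rewrite addrK; lra.
by case/orP: (lt_total (lam_half i)) => h; apply/orP; [right | left];
  apply/andP; split; lra.
Qed.
End CuspsOfComplementarySequence.

Lemma card_ord_all (n : nat) (p : pred int) :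
  (forall i, p i) -> #|[set i : 'I_n | p (i%:Z + 1)]| = n.
Proof.
move=> pT; rewrite -[RHS]card_ord -cardsT; congr #|pred_of_set _|.
by apply/setP => i; rewrite !inE pT.
Qed.

Theorem mainTheorem5 (R : realFieldType) (n : nat) (P : int -> 'rV[R]_2)
  (D : int -> 'rV[R]_2) (lam : int -> R) :
  CPOS n P -> equal_area P ->
  ~ (exists O : 'rV[R]_2, symmetric_wrt n P O) ->
  is_D n P D -> is_lambda n P D lam ->
  [/\ forall i : int, D (i - 1) != D i,
      forall i : int, M n P i = 2^-1 *: (D (i - 1) + D i),
      forall i : int, 1 <= i -> i <= n%:Z -> area_evolute_cusp lam i,
      forall i : int, 1 <= i -> i <= n%:Z -> css_cusp lam i &
      (#|[set i : 'I_n | area_evolute_cusp lam (i%:Z + 1)]| = n /\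
      #|[set i : 'I_n | css_cusp lam (i%:Z + 1)]| = n)].
Proof.
move=> [n2 [_ [convex [_ [parallel orient]]]]] eq_area asym isD isL.
have lam_sum := lambda_sum n2 convex parallel orient eq_area isD isL.
have lam_half := lambda_neq_half n2 convex parallel orient eq_area isD isL asym.
have evolute_cusps := all_area_evolute_cusps lam_sum lam_half.
have css_cusps := all_css_cusps lam_sum lam_half.
split.
- by move=> i; exact: (D_consecutive_neq n2 convex parallel orient eq_area isD isL asym i).
- by move=> i; exact: (M_midpoint n2 convex parallel orient eq_area isD isL i).
- by move=> i _ _; apply: evolute_cusps.
- by move=> i _ _; apply: css_cusps.
- by split; apply: card_ord_all.
Qed.
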